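(* In the Standing Setting, with $c,d$ defined for a flag $(p,B)$ as below and $\lambda^*=\lambda/(r,\lambda)$, we have $\lambda^*=c+d-2$.
   Context: Standing Setting: $\mathcal{D}=(\Omega,\mathcal{B})$ is a non-trivial $2$-$(v,k,\lambda)$ design (every two distinct points in exactly $\lambda$ blocks, blocks of size $k$, $2<k<v$) with $b$ blocks and replication number $r$, satisfying $\lambda\ge (r,\lambda)^2$. $G\le\mathrm{Aut}(\mathcal{D})$ is flag-transitive (transitive on pairs $(p,B)$ with $p\in B\in\mathcal{B}$). Moreover $\Omega=\Delta\times\Delta$ with $|\Delta|=\omega\ge 5$ odd, so $v=\omega^2$, and $T\times T\trianglelefteq G\le T_0\wr \mathbb{Z}_2$ acting in product action (the $\mathbb{Z}_2$ interchanging the two coordinates), where $T_0\le\mathrm{Sym}(\Delta)$ is $2$-transitive with nonabelian simple socle $T$; $G$ has rank $3$ on $\Omega$. For a flag $(p,B)$ with $p=(\alpha,\beta)$, $c$ is the number of points of $B$ with first coordinate $\alpha$ and $d$ the number of points of $B$ with second coordinate $\beta$. *)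

From HB Require Import structures.
From mathcomp Require Import all_boot all_fingroup all_solvable.
Set Implicit Arguments. Unset Strict Implicit. Unset Printing Implicit Defensive.
Import GroupScope.

Section ProductAction.
Variable D : finType.

Definition prod_fun (a b : {perm D}) (u : D * D) : D * D := (a u.1, b u.2).
Lemma prod_fun_inj a b : injective (prod_fun a b).
Proof.
move=> [x y] [x' y'] [/perm_inj -> /perm_inj ->]; done.
Qed.
Definition prod_perm (a b : {perm D}) : {perm (D * D)} := perm (@prod_fun_inj a b).

Definition swap_fun (u : D * D) : D * D := (u.2, u.1).
Lemma swap_fun_inj : injective swap_fun.
Proof. by move=> [x y] [x' y'] [-> ->]. Qed.
Definition swap_perm : {perm (D * D)} := perm swap_fun_inj.

Definition prodX (K : {set {perm D}}) : {set {perm (D * D)}} :=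
  [set prod_perm u.1 u.2 | u in setX K K].

Definition wreath2 (K : {set {perm D}}) : {set {perm (D * D)}} :=
  << prodX K :|: [set swap_perm] >>.

Definition socle (K : {group {perm D}}) : {set {perm D}} :=
  << \bigcup_(M : {group {perm D}} | minnormal M K) M >>.

Definition two_transitive (K : {set {perm D}}) : Prop :=
  forall x1 x2 y1 y2 : D, x1 != x2 -> y1 != y2 ->
    exists2 g, g \in K & g x1 = y1 /\ g x2 = y2.

End ProductAction.

Section Designs.
Variable P : finType.

Definition two_design (blocks : {set {set P}}) (k lambda : nat) : Prop :=
  (forall B, B \in blocks -> #|B| = k) /\
  (forall p q : P, p != q -> #|[set B in blocks | (p \in B) && (q \in B)]| = lambda).

Definition replication (blocks : {set {set P}}) (r : nat) : Prop :=
  forall p : P, #|[set B in blocks | p \in B]| = r.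

Definition automorphisms (blocks : {set {set P}}) (G : {set {perm P}}) : Prop :=
  forall g B, g \in G -> B \in blocks -> [set g x | x in B] \in blocks.

Definition flag_transitive (blocks : {set {set P}}) (G : {set {perm P}}) : Prop :=
  forall p B p' B', B \in blocks -> p \in B -> B' \in blocks -> p' \in B' ->
    exists2 g, g \in G & g p = p' /\ [set g x | x in B] = B'.

(* rank of a transitive permutation group = number of orbitals *)
Definition rank3 (G : {set {perm P}}) : Prop :=
  [transitive G, on [set: P] | 'P] /\
  #|[set [set (g u.1, g u.2) | g : {perm P} in G] | u : P * P]| = 3.

End Designs.

(* Write w = |Delta| and, for the point p, let cross(p) be the 2w - 2 points
   other than p that share a row or a column with p.  The proof is counting:
   1. Design counting.  If every block through p meets a set S (p not in S) in
      m points, then r * m = lambda * |S|.  With S the complement of p this is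
      r (k - 1) = lambda (v - 1); together with b k = v r and Fisher's
      inequality v <= b it also gives k <= r.
   2. Grid geometry.  Every element of T0 wr Z_2 preserves the relation "same
      row or same column", so by flag-transitivity all blocks through p meet
      cross(p) in the same number m of points, and m = c + d - 2 for the given
      block B.  Step 1 then yields r m = lambda (2w - 2).
   3. Arithmetic.  From r m = lambda (2w - 2), r (k - 1) = lambda (w^2 - 1),
      k <= r and (r, lambda)^2 <= lambda one gets m = lambda / (r, lambda). *)
From HB Require Import structures.
From mathcomp Require Import all_boot all_fingroup all_solvable.
Import GroupScope.
From mathcomp Require all_algebra ring.
From mathcomp Require Import zify.

(* The incidence matrix N satisfies N N^T = (r - lambda) I + lambda J,
   which is invertible over the rationals, so N has full row rank. *)
Module Fisher.
Import all_algebra ring.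
Import GRing.Theory Num.Theory.
Local Open Scope ring_scope.

Lemma fisher_inequality {P : finType} {blocks : {set {set P}}} {k lambda r : nat} :
  two_design blocks k lambda -> replication blocks r -> (lambda < r)%N ->
  (#|P| <= #|blocks|)%N.
Proof.
move=> [_ Hlambda] Hrep lt_lambda_r.
set v := #|P|; set b := #|blocks|.
pose N : 'M[rat]_(v, b) :=
  \matrix_(i, j) ((enum_val i \in (enum_val j : {set P}))%:R).
pose a : rat := (r - lambda)%:R.
pose l : rat := lambda%:R.
pose J : 'M[rat]_v := const_mx 1.
have NNt : N *m N^T = a%:M + l *: J.
  apply/matrixP => i j; rewrite !mxE.
  under eq_bigr => t _ do rewrite !mxE -natrM mulnb.
  rewrite -natr_sum -(big_enum_val (fun B : {set P} =>
    (((enum_val i \in B) && (enum_val j \in B)) : nat))).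
  rewrite -big_mkcondr /= sum1_card.
  have -> : (i == j) = (enum_val i == enum_val j).
    by apply/eqP/eqP => [->|/enum_val_inj].
  case: eqP => [<-|/eqP ne].
    have -> : #|[pred B in blocks | (enum_val i \in B) && (enum_val i \in B)]| = r.
      by rewrite -(Hrep (enum_val i)) -cardsE; apply: eq_card => B; rewrite !inE andbb.
    by rewrite mulr1n mulr1 /a /l -natrD subnK // ltnW.
  rewrite mulr0n add0r mulr1 /l -(Hlambda _ _ ne) -cardsE.
  by congr (_%:R); apply: eq_card => B; rewrite !inE.
have JJ : J *m J = (v%:R : rat) *: J.
  apply/matrixP => i j; rewrite !mxE.
  under eq_bigr => t _ do rewrite !mxE mulr1.
  by rewrite sumr_const card_ord mulr1.
have a_neq0 : a != 0 by rewrite pnatr_eq0 subn_eq0 -ltnNge lt_lambda_r.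
have den_neq0 : a + l * v%:R != 0.
  by rewrite -natrM -natrD pnatr_eq0 addn_eq0 subn_eq0 leqNgt lt_lambda_r.
pose t := l / (a + l * v%:R).
pose X : 'M[rat]_v := a^-1 *: (1%:M - t *: J).
have right_inverse : N *m (N^T *m X) = 1%:M.
  rewrite mulmxA NNt /X -scalemxAr mulmxDr mulmxN !mulmxDl mul_scalar_mx mulmx1.
  rewrite mul_scalar_mx -scalemxAl -scalemxAr JJ !scalerA.
  apply/matrixP => i j; rewrite !mxE mulr1.
  have -> : a * t * 1 + l * t * v%:R * 1 = l by rewrite /t; field; exact: den_neq0.
  by rewrite addrK mulrA mulVf // mul1r.
have := mxrankM_maxl N (N^T *m X); rewrite right_inverse mxrank1 => rankN.
exact: leq_trans rankN (rank_leq_col _).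
Qed.

End Fisher.

Section DesignCounting.
Context {P : finType} {blocks : {set {set P}}} {k lambda r : nat}.
Context (Hdesign : two_design blocks k lambda) (Hrep : replication blocks r).
Local Open Scope nat_scope.

Lemma sum_indicator (T : finType) (A C : pred T) :
  \sum_(x | A x) (C x : nat) = #|[set x | A x && C x]|.
Proof.
by rewrite -sum1dep_card big_mkcondr /=; apply: eq_bigr => x _; case: (C x).
Qed.

(* Counting pairs (B, q) with p, q in B and q in S in two ways. *)
Lemma count_blocks_meeting {S : {set P}} {p : P} {m : nat} :
  p \notin S -> (forall B, B \in blocks -> p \in B -> #|B :&: S| = m) ->
  r * m = lambda * #|S|.
Proof.
move=> pNS meetS.
have by_blocks : \sum_(B | (B \in blocks) && (p \in B)) \sum_(q | q \in S) (q \in B : nat)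
    = r * m.
  rewrite -(Hrep p) -sum1dep_card big_distrl /=.
  apply: eq_bigr => B /andP[HB pB]; rewrite mul1n -(meetS B HB pB) sum_indicator.
  by apply: eq_card => q; rewrite !inE andbC.
rewrite -by_blocks exchange_big /= -sum1_card big_distrr /= muln1.
apply: eq_bigr => q qS; rewrite sum_indicator -(Hdesign.2 p q).
  by apply: eq_card => B; rewrite !inE andbA.
by apply: contraNneq pNS => ->.
Qed.

Lemma replication_identity : 0 < #|P| -> r * (k - 1) = lambda * (#|P| - 1).
Proof.
case/card_gt0P => p _; rewrite [#|P| - 1]subn1 -(cardsC1 p).
apply: (@count_blocks_meeting _ p); first by rewrite !inE eqxx.
move=> B HB pB; have := cardsD1 p B; rewrite pB (Hdesign.1 B HB) add1n => ->.
by rewrite subn1 /=; apply: eq_card => q; rewrite !inE andbC.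
Qed.

Lemma flag_count : #|blocks| * k = #|P| * r.
Proof.
transitivity (\sum_(B in blocks) \sum_(q | true) (q \in B : nat)).
  rewrite -sum1_card big_distrl /=; apply: eq_bigr => B HB.
  rewrite mul1n sum_indicator -(Hdesign.1 B HB); apply: eq_card => q; by rewrite !inE.
rewrite exchange_big /= -sum1_card big_distrl /=; apply: eq_bigr => q _.
rewrite mul1n sum_indicator -(Hrep q); apply: eq_card => B; by rewrite !inE.
Qed.

(* In a non-trivial design lambda < r, hence (Fisher) k <= r. *)
Lemma block_size_le_replication : 0 < lambda -> 1 < k -> k < #|P| -> k <= r.
Proof.
move=> lambda_gt0 k_gt1 k_lt_v.
have v_gt0 : 0 < #|P| := leq_ltn_trans (leq0n k) k_lt_v.
have rk := replication_identity v_gt0.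
have lt_lambda_r : lambda < r.
  have : lambda * (k - 1) < r * (k - 1) by rewrite rk ltn_mul2l lambda_gt0 ltn_sub2rE // ltnW.
  by rewrite ltn_mul2r => /andP[].
have v_le_b := Fisher.fisher_inequality Hdesign Hrep lt_lambda_r.
rewrite -(leq_pmul2l v_gt0) -flag_count.
by rewrite leq_mul2r v_le_b orbT.
Qed.

End DesignCounting.

Section Grid.
Context {D : finType}.
Implicit Types (u w p : D * D) (B : {set D * D}).
Local Open Scope nat_scope.

Definition collinear u w := (u.1 == w.1) || (u.2 == w.2).

(* Every element of K wr Z_2 preserves collinearity: the generators do, and
   the permutations preserving it form a group. *)
Lemma wreath2_collinear {K : {set {perm D}}} {g} :
  g \in wreath2 K -> forall u w, collinear (g u) (g w) = collinear u w.
Proof.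
pose S := [set g : {perm D * D} |
  [forall u, forall w, collinear (g u) (g w) == collinear u w]].
have groupS : group_set S.
  apply/group_setP; split.
    by rewrite inE; apply/forallP => u; apply/forallP => w; rewrite !perm1.
  move=> x y; rewrite !inE => /forallP Hx /forallP Hy.
  apply/forallP => u; apply/forallP => w; rewrite !permM.
  by rewrite (eqP (forallP (Hy _) _)) (eqP (forallP (Hx _) _)).
have wreathS : wreath2 K \subset Group groupS.
  rewrite /wreath2 gen_subG; apply/subsetP => x; case/setUP.
    case/imsetP => [[a b] _ ->]; rewrite inE.
    apply/forallP => u; apply/forallP => w.
    by rewrite /prod_perm !permE /prod_fun /collinear /= !(inj_eq perm_inj).
  rewrite inE => /eqP ->; rewrite inE.
  apply/forallP => u; apply/forallP => w.
  by rewrite /swap_perm !permE /swap_fun /collinear /= orbC.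
move=> Kg u w; have := subsetP wreathS g Kg; rewrite inE => /forallP Hg.
exact: (eqP (forallP (Hg u) w)).
Qed.

Definition cross p := [set q | (q != p) && collinear q p].

Lemma card_union_minus_common (T : finType) (X Y : {set T}) (p : T) :
  X :&: Y = [set p] -> #|(X :|: Y) :\ p| + 2 = #|X| + #|Y|.
Proof.
move=> XY; have := cardsUI X Y; rewrite XY cards1 => <-.
have := cardsD1 p (X :|: Y).
have -> : p \in X :|: Y by rewrite inE; have := set11 p; rewrite -XY inE => /andP[->].
by move=> ->; rewrite add1n addSnnS.
Qed.

Lemma card_block_cross {p B} : p \in B ->
  #|B :&: cross p| + 2 =
  #|[set q in B | q.1 == p.1]| + #|[set q in B | q.2 == p.2]|.
Proof.
move=> pB.
have -> : B :&: cross p =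
    ([set q in B | q.1 == p.1] :|: [set q in B | q.2 == p.2]) :\ p.
  by apply/setP => q; rewrite !inE /collinear; case: (q == p); case: (q \in B).
apply: card_union_minus_common; apply/setP => q; rewrite !inE.
apply/idP/idP => [/andP[/andP[_ /eqP e1] /andP[_ /eqP e2]]|/eqP ->].
  by apply/eqP; case: q e1 e2 => q1 q2 /= -> ->; case: p {pB}.
by rewrite pB !eqxx.
Qed.

(* |cross(p)| = 2w - 2: the case B = D x D of the previous lemma. *)
Lemma card_cross p : #|cross p| + 2 = #|D| + #|D|.
Proof.
have := card_block_cross (in_setT p); rewrite setTI => ->.
have row : [set q in [set: D * D] | q.1 == p.1] = setX [set p.1] [set: D].
  by apply/setP => q; rewrite !inE andbT.
have col : [set q in [set: D * D] | q.2 == p.2] = setX [set: D] [set p.2].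
  by apply/setP => q; rewrite !inE.
by rewrite row col !cardsX !cards1 cardsT mul1n muln1.
Qed.

(* A permutation fixing p and preserving collinearity maps cross(p) onto
   itself, so it does not change how many points of a set lie in cross(p). *)
Lemma card_image_cross {g : {perm D * D}} {p B} :
  g p = p -> (forall u w, collinear (g u) (g w) = collinear u w) ->
  #|[set g x | x in B] :&: cross p| = #|B :&: cross p|.
Proof.
move=> gp g_coll.
have cross_g x : (g x \in cross p) = (x \in cross p).
  by rewrite !inE -{1 2}gp (inj_eq perm_inj) g_coll.
have -> : [set g x | x in B] :&: cross p = [set g x | x in B :&: cross p].
  apply/setP => y; rewrite inE; apply/andP/imsetP => [[/imsetP[x xB ->]]|[x]].
    by rewrite cross_g => xC; exists x; rewrite // inE xB.
  by rewrite inE => /andP[xB xC] ->; rewrite imset_f // cross_g.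
exact/card_imset/perm_inj.
Qed.

End Grid.

Section Arithmetic.
Local Open Scope nat_scope.

Lemma coprime_reduced r l : 0 < l -> coprime (r %/ gcdn r l) (l %/ gcdn r l).
Proof.
move=> l_gt0; set g := gcdn r l.
have g_gt0 : 0 < g by rewrite gcdn_gt0 l_gt0 orbT.
rewrite /coprime -(eqn_pmul2r g_gt0) mul1n muln_gcdl !divnK ?dvdn_gcdl ?dvdn_gcdr //.
Qed.

Lemma reduced_proportion {r l x y} : 0 < l -> r * x = l * y ->
  exists2 m, x = l %/ gcdn r l * m & r %/ gcdn r l * m = y.
Proof.
move=> l_gt0 rx_ly; set g := gcdn r l.
have g_gt0 : 0 < g by rewrite gcdn_gt0 l_gt0 orbT.
have l'_gt0 : 0 < l %/ g by rewrite divn_gt0 // dvdn_leq // dvdn_gcdr.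
have rx_ly' : r %/ g * x = l %/ g * y.
  apply/eqP; rewrite -(eqn_pmul2r g_gt0) mulnAC divnK ?dvdn_gcdl //.
  by rewrite mulnAC divnK ?dvdn_gcdr // rx_ly.
have : l %/ g %| x.
  have co : coprime (l %/ g) (r %/ g) by rewrite coprime_sym coprime_reduced.
  by rewrite -(Gauss_dvdr _ co) rx_ly' dvdn_mulr.
case/dvdnP => m x_eq; exists m; first by rewrite mulnC.
by apply/eqP; rewrite -(eqn_pmul2l l'_gt0) mulnCA -rx_ly' x_eq [m * _]mulnC mulnC.
Qed.

Lemma reduced_lambda {r l w k m} :
  0 < l -> 0 < k -> 2 <= w -> k <= r -> gcdn r l ^ 2 <= l ->
  r * m = l * (w + w - 2) -> r * (k - 1) = l * (w * w - 1) -> l %/ gcdn r l = m.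
Proof.
move=> l_gt0 k_gt0 w_ge2 k_le_r g2_le_l Em Ek.
have [n -> Ern] := reduced_proportion l_gt0 Em.
set g := gcdn r l in g2_le_l Ern *; set r' := r %/ g in Ern.
have r_eq : r = r' * g by rewrite divnK // dvdn_gcdl.
have [n_ge2|n_lt2] := leqP 2 n; last first.
  case: n n_lt2 Ern => [|[|//]] _ Ern; last by rewrite muln1.
  by move: Ern; rewrite muln0; lia.
exfalso.
have r'_le : r' <= w - 1 by nia.
have r_le : r * r <= (w - 1) * (w - 1) * l.
  rewrite r_eq mulnACA; apply: leq_mul; first exact: leq_mul.
  by rewrite mulnn.
have : r * (k - 1) < r * r by rewrite ltn_mul2l; apply/andP; split; lia.
rewrite Ek; nia.
Qed.

End Arithmetic.

Theorem lemma2p3 (Delta : finType) (blocks : {set {set (Delta * Delta)}})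
    (k lambda r : nat)
    (G : {group {perm (Delta * Delta)}}) (T0 T : {group {perm Delta}}) :
  (* Delta has odd size omega >= 5, so v = omega^2 *)
  5 <= #|Delta| -> odd #|Delta| ->
  (* non-trivial 2-(v,k,lambda) design with replication number r *)
  two_design blocks k lambda -> 0 < lambda -> 2 < k -> k < #|Delta| ^ 2 ->
  replication blocks r ->
  (gcdn r lambda) ^ 2 <= lambda ->
  (* T0 2-transitive on Delta with nonabelian simple socle T *)
  two_transitive T0 -> T :=: socle T0 -> simple T -> ~~ abelian T ->
  (* T x T normal in G <= T0 wr Z_2 (product action) *)
  prodX T <| G -> G \subset wreath2 T0 ->
  (* G flag-transitive automorphism group of rank 3 *)
  automorphisms blocks G -> flag_transitive blocks G -> rank3 G ->
  forall (p : Delta * Delta) (B : {set (Delta * Delta)}),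
    B \in blocks -> p \in B ->
    let c := #|[set q in B | q.1 == p.1]| in
    let d := #|[set q in B | q.2 == p.2]| in
    lambda %/ gcdn r lambda = c + d - 2.
Proof.
move=> w_ge5 _ Hdesign lambda_gt0 k_gt2 k_lt_v Hrep gcd2_le _ _ _ _ _ G_wreath _
  Hflag _ p B HB pB c d.
have card_grid : #|{: Delta * Delta}| = (#|Delta| * #|Delta|)%N by rewrite card_prod.
have k_lt_v' : (k < #|{: Delta * Delta}|)%N by rewrite card_grid mulnn.
(* Flag-transitivity: every block through p meets cross(p) like B does. *)
have meet_cross B' : B' \in blocks -> p \in B' -> #|B' :&: cross p| = #|B :&: cross p|.
  move=> HB' pB'; have [g Gg [gp <-]] := Hflag p B p B' HB pB HB' pB'.
  exact: card_image_cross gp (wreath2_collinear (subsetP G_wreath g Gg)).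
have p_cross : p \notin cross p by rewrite !inE eqxx.
have E_cross := count_blocks_meeting Hdesign Hrep p_cross meet_cross.
have E_k := replication_identity Hdesign Hrep (leq_ltn_trans (leq0n k) k_lt_v').
have k_le_r := block_size_le_replication Hdesign Hrep lambda_gt0 (ltnW k_gt2) k_lt_v'.
rewrite card_grid in E_k.
have c_d : (#|B :&: cross p| = c + d - 2)%N by rewrite -card_block_cross ?addnK.
have card_cross_p : (#|cross p| = #|Delta| + #|Delta| - 2)%N by rewrite -(card_cross p) addnK.
rewrite card_cross_p c_d in E_cross.
apply: (reduced_lambda lambda_gt0 _ _ k_le_r gcd2_le E_cross E_k).
  exact: leq_trans (ltnW k_gt2).
exact: leq_trans w_ge5.
Qed.
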